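(* For all $n\in\mathbb N$, \[ \max\Big\{|\alpha(n,0)|,\ |\alpha(n,1)|,\ \sum_{s=2}^\infty|\alpha(n,s)|\Big\}\le\frac1N\Big(1+\frac6N\Big)^{n-1}. \]
   Context: $E$ is a finite set with $N=\#E>8$ elements; $Q$ is an irreducible stochastic matrix on $E$ with $Q(x,y)=Q(y,x)$ for all $x,y$ and $\mathrm{tr}(Q)=0$. The function $\alpha:\mathbb Z_+\times\mathbb Z_+\to\mathbb R$ is defined by $\alpha(0,s)=0$ for all $s$ and, for $n\in\mathbb Z_+$, $\alpha(n+1,0)=\frac2{N^2}+\alpha(n,0)+\frac2{N^2}\sum_{s\ge1}\alpha(n,s)\mathrm{tr}(Q^s)$, $\alpha(n+1,1)=-\frac2{N^2}+\frac{N-2}N\alpha(n,1)-\frac2{N^2}\sum_{s\ge1}\alpha(n,s)\mathrm{tr}(Q^s)$, $\alpha(n+1,s)=\frac{N-2}N\alpha(n,s)+\frac2N\alpha(n,s-1)$ for $s\ge2$. *)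

From HB Require Import structures.
From mathcomp Require Import all_boot all_order all_algebra.
Set Implicit Arguments. Unset Strict Implicit. Unset Printing Implicit Defensive.
Import Order.TTheory GRing.Theory Num.Theory.
Local Open Scope ring_scope.

(* matrix power Q^k, valid for any dimension N (including non-successor N) *)
Definition mxpow (R : pzRingType) (N : nat) (Q : 'M[R]_N) (k : nat) : 'M[R]_N :=
  iter k (mulmx Q) 1%:M.

Definition stochastic (R : numDomainType) (N : nat) (Q : 'M[R]_N) : Prop :=
  (forall x y, 0 <= Q x y) /\ (forall x, \sum_y Q x y = 1).

Definition irreducible_mx (R : numDomainType) (N : nat) (Q : 'M[R]_N) : Prop :=
  forall x y, exists k : nat, 0 < mxpow Q k x y.

(* alpha n s.  The infinite sums over s >= 1 in the recursion are finitely
   supported: alpha n s = 0 for s > n (immediate induction), so the sum at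
   step n is taken over 1 <= s <= n, which is exact. *)
Fixpoint alpha (R : numFieldType) (N : nat) (Q : 'M[R]_N) (n : nat) : nat -> R :=
  match n with
  | 0 => fun _ => 0
  | n'.+1 =>
      let a := alpha Q n' in
      let S := \sum_(1 <= s < n'.+1) a s * \tr (mxpow Q s) in
      fun s => match s with
               | 0 => 2 / (N%:R ^+ 2) + a 0%N + 2 / (N%:R ^+ 2) * S
               | 1 => - (2 / (N%:R ^+ 2)) + (N%:R - 2) / N%:R * a 1%N
                      - 2 / (N%:R ^+ 2) * S
               | s'.+2 => (N%:R - 2) / N%:R * a s'.+2 + 2 / N%:R * a s'.+1
               end
  end.

From HB Require Import structures.
From mathcomp Require Import all_boot all_order all_algebra.
From mathcomp Require Import ring lra.
Import Order.TTheory GRing.Theory Num.Theory.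
Local Open Scope ring_scope.

(* Write [m_n] for the common bound on [|alpha n 0|], [|alpha n 1|] and the
   l1-norm of the tail [(alpha n s)_(s >= 2)].  Since [Q^s] is stochastic,
   [|tr Q^s| <= N], and [tr Q = 0] removes the [s = 1] term, so the sums
   [\sum_s alpha n s tr(Q^s)] are at most [N m_n] in absolute value.  The
   recursion then gives [m_(n+1) <= 2/N^2 + (1 + 2/N) m_n], and this affine
   map sends [N^-1 (1 + 6/N)^(n-1)] below [N^-1 (1 + 6/N)^n]. *)

Lemma stochastic_mxpow (R : numDomainType) (N : nat) (Q : 'M[R]_N) (s : nat) :
  stochastic Q -> stochastic (mxpow Q s).
Proof.
move=> [Q_ge0 Q_row1]; elim: s => [|s [P_ge0 P_row1]].
  split=> [x y|x]; first by rewrite mxE ler0n.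
  rewrite (bigD1 x) //= big1 ?addr0 ?mxE ?eqxx //.
  by move=> y /negbTE; rewrite mxE eq_sym => ->.
rewrite [mxpow Q s.+1]/=; split=> [x y|x].
  by rewrite mxE; apply: sumr_ge0 => k _; apply: mulr_ge0.
under eq_bigr do rewrite mxE.
rewrite exchange_big /=.
under eq_bigr do rewrite -mulr_sumr P_row1 mulr1.
exact: Q_row1.
Qed.

Lemma norm_mxtrace_stochastic (R : numDomainType) (N : nat) (P : 'M[R]_N) :
  stochastic P -> `|\tr P| <= N%:R.
Proof.
move=> [P_ge0 P_row1].
rewrite ger0_norm; last by apply: sumr_ge0.
rewrite -[N in N%:R]card_ord -sumr_const /mxtrace.
apply: ler_sum => i _; rewrite -(P_row1 i) (bigD1 i) //= lerDl.
exact: sumr_ge0.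
Qed.

Lemma norm_sum_mxtrace_mxpow {R : numDomainType} {N : nat} {Q : 'M[R]_N}
    (a : nat -> R) (K : nat) :
  stochastic Q -> \tr Q = 0 ->
  `|\sum_(1 <= s < K) a s * \tr (mxpow Q s)|
    <= N%:R * \sum_(2 <= s < K) `|a s|.
Proof.
move=> hQ trQ; apply: le_trans (ler_norm_sum _ _ _) _.
have [K_gt1|K_le1] := ltnP 1 K; last first.
  by rewrite !big_geq // ?mulr0 // (leq_trans K_le1).
rewrite big_ltn // /mxpow /= mulmx1 trQ mulr0 normr0 add0r mulr_sumr.
apply: ler_sum => s _; rewrite normrM mulrC ler_wpM2r //.
exact/norm_mxtrace_stochastic/stochastic_mxpow.
Qed.

Definition bounded_by {R : numDomainType} (a : nat -> R) (m : R) : Prop :=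
  [/\ `|a 0%N| <= m, `|a 1%N| <= m & forall M, \sum_(2 <= s < M) `|a s| <= m].

Section AlphaStep.

Context {R : realFieldType} {N : nat} {Q : 'M[R]_N} {n : nat} {m : R}.
Hypotheses (N_gt1 : (1 < N)%N) (hQ : stochastic Q) (trQ : \tr Q = 0).
Hypotheses (m_ge0 : 0 <= m) (alpha_n_bounded : bounded_by (alpha Q n) m).

Let c : R := N%:R.
Let k : R := 2 / c ^+ 2.
Let t : R := 2 / c.
Let S : R := \sum_(1 <= s < n.+1) alpha Q n s * \tr (mxpow Q s).

Let c_ge2 : 2 <= c. Proof. by rewrite ler_nat. Qed.
Let c_neq0 : c != 0. Proof. by rewrite gt_eqF //; have := c_ge2; lra. Qed.
Let k_ge0 : 0 <= k. Proof. by rewrite divr_ge0 // exprn_ge0 //; have := c_ge2; lra. Qed.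
Let t_ge0 : 0 <= t. Proof. by rewrite divr_ge0 //; have := c_ge2; lra. Qed.
Let keep_weight : (c - 2) / c = 1 - t. Proof. by rewrite /t; field. Qed.
Let keep_weight_ge0 : 0 <= 1 - t.
Proof. by rewrite -keep_weight divr_ge0 //; have := c_ge2; lra. Qed.

Let kS_le : k * `|S| <= t * m.
Proof.
have [_ _ tail_le] := alpha_n_bounded.
have -> : t = k * c by rewrite /k /t; field.
rewrite -mulrA ler_wpM2l //.
apply: le_trans (norm_sum_mxtrace_mxpow _ _ hQ trQ) _.
by rewrite ler_wpM2l ?ler0n.
Qed.

Lemma alpha_step0_le : `|alpha Q n.+1 0| <= k + (1 + t) * m.
Proof.
have [a0_le _ _] := alpha_n_bounded.
rewrite [alpha _ _.+1 _]/= -/c -/k -/S.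
apply: le_trans (ler_normD _ _) _; apply: le_trans (lerD (ler_normD _ _) (lexx _)) _.
rewrite (ger0_norm k_ge0) normrM (ger0_norm k_ge0) -addrA lerD2l mulrDl mul1r.
exact: lerD.
Qed.

Lemma alpha_step1_le : `|alpha Q n.+1 1| <= k + (1 + t) * m.
Proof.
have [_ a1_le _] := alpha_n_bounded.
rewrite [alpha _ _.+1 _]/= -/c -/k -/S keep_weight.
apply: le_trans (ler_normD _ _) _; apply: le_trans (lerD (ler_normD _ _) (lexx _)) _.
rewrite !normrN (ger0_norm k_ge0) [`|k * _|]normrM (ger0_norm k_ge0).
rewrite normrM (ger0_norm keep_weight_ge0) -addrA lerD2l.
apply: le_trans (lerD (ler_wpM2l keep_weight_ge0 a1_le) kS_le) _.
have := mulr_ge0 t_ge0 m_ge0; lra.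
Qed.

(* Each tail coordinate is a convex combination of two neighbours, so the tail
   norm grows only through the leak of [alpha n 1] into [alpha (n+1) 2]. *)
Lemma alpha_step_tail_le (M : nat) :
  \sum_(2 <= s < M) `|alpha Q n.+1 s| <= k + (1 + t) * m.
Proof.
have [_ a1_le tail_le] := alpha_n_bounded.
have shifted_le : \sum_(1 <= s < M.-1) `|alpha Q n s| <= m + m.
  have [M_gt2|M_le2] := ltnP 1 M.-1; last by rewrite big_geq // addr_ge0.
  by rewrite big_ltn // lerD.
apply: (@le_trans _ _ (\sum_(2 <= s < M)
    ((1 - t) * `|alpha Q n s| + t * `|alpha Q n s.-1|))).
  rewrite !big_nat; apply: ler_sum => -[|[|s]] // _.
  rewrite [alpha _ _.+1 _]/= -/c -/t keep_weight.
  apply: le_trans (ler_normD _ _) _.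
  by rewrite [`|t * _|]normrM (ger0_norm t_ge0) normrM (ger0_norm keep_weight_ge0).
rewrite big_split /= -!mulr_sumr [X in t * X]big_add1 /=.
apply: le_trans (lerD (ler_wpM2l keep_weight_ge0 (tail_le M))
                      (ler_wpM2l t_ge0 shifted_le)) _.
have := k_ge0; have := mulr_ge0 t_ge0 m_ge0; lra.
Qed.

Lemma alpha_step_bounded : bounded_by (alpha Q n.+1) (k + (1 + t) * m).
Proof.
by split; [exact: alpha_step0_le | exact: alpha_step1_le | exact: alpha_step_tail_le].
Qed.

End AlphaStep.

Lemma bounded_by_le {R : numDomainType} {a : nat -> R} {m m' : R} :
  bounded_by a m -> m <= m' -> bounded_by a m'.
Proof.
move=> [a0 a1 tail] le_mm'.
by split=> [||M]; [exact: le_trans a0 _ | exact: le_trans a1 _ | exact: le_trans (tail M) _].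
Qed.

Lemma bounded_by_max_le {R : realDomainType} {a : nat -> R} {m : R} (M : nat) :
  bounded_by a m ->
  Num.max `|a 0%N| (Num.max `|a 1%N| (\sum_(2 <= s < M) `|a s|)) <= m.
Proof. by case=> a0 a1 tail; rewrite !ge_max a0 a1 tail. Qed.

Lemma alpha0_bounded {R : numFieldType} {N : nat} (Q : 'M[R]_N) :
  bounded_by (alpha Q 0) 0.
Proof.
by split=> [||M]; rewrite ?normr0 // big1 // => s _; rewrite normr0.
Qed.

Lemma affine_step_geometric_le (R : realFieldType) (c x : R) :
  0 < c -> 1 <= x ->
  2 / c ^+ 2 + (1 + 2 / c) * (c^-1 * x) <= c^-1 * ((1 + 6 / c) * x).
Proof.
move=> c_gt0 x_ge1; rewrite -subr_ge0.
have -> : c^-1 * ((1 + 6 / c) * x) - (2 / c ^+ 2 + (1 + 2 / c) * (c^-1 * x))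
  = c^-1 ^+ 2 * (4 * x - 2) by field; rewrite gt_eqF.
by apply: mulr_ge0; [rewrite exprn_ge0 // invr_ge0 ltW | lra].
Qed.

Lemma alpha_bounded_geometric {R : realFieldType} {N : nat} {Q : 'M[R]_N} (n : nat) :
  (1 < N)%N -> stochastic Q -> \tr Q = 0 ->
  bounded_by (alpha Q n.+1) (N%:R^-1 * (1 + 6 / N%:R) ^+ n).
Proof.
move=> N_gt1 hQ trQ.
have c_ge2 : 2 <= N%:R :> R by rewrite ler_nat.
have c_gt0 : 0 < N%:R :> R by lra.
have ratio_ge1 : 1 <= 1 + 6 / N%:R :> R by rewrite lerDl divr_ge0 //; lra.
elim: n => [|n IHn].
  apply: bounded_by_le (alpha_step_bounded N_gt1 hQ trQ (lexx 0) (alpha0_bounded Q)) _.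
  rewrite expr0 mulr0 addr0 mulr1 -subr_ge0.
  have -> : N%:R^-1 - 2 / N%:R ^+ 2 = N%:R^-1 ^+ 2 * (N%:R - 2) :> R.
    by field; rewrite gt_eqF.
  by apply: mulr_ge0; [rewrite exprn_ge0 // invr_ge0 ltW | lra].
have m_ge0 : 0 <= N%:R^-1 * (1 + 6 / N%:R) ^+ n :> R.
  by apply: mulr_ge0; [rewrite invr_ge0 ltW | apply: exprn_ge0; lra].
apply: bounded_by_le (alpha_step_bounded N_gt1 hQ trQ m_ge0 IHn) _.
by rewrite [in X in _ <= X]exprS affine_step_geometric_le // exprn_ege1.
Qed.

Theorem lemma3p4 (R : realFieldType) (N : nat) (Q : 'M[R]_N)
  (hN : (8 < N)%N)
  (hstoch : stochastic Q) (hirr : irreducible_mx Q)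
  (hsym : forall x y, Q x y = Q y x)
  (htr : \tr Q = 0) :
  forall (n M : nat),
    Num.max `|alpha Q n 0%N|
      (Num.max `|alpha Q n 1%N| (\sum_(2 <= s < M) `|alpha Q n s|))
    <= N%:R^-1 * (1 + 6 / N%:R) ^ (n%:Z - 1).
Proof.
have N_gt1 : (1 < N)%N by apply: leq_trans hN.
case=> [|n] M; apply: bounded_by_max_le.
  apply: bounded_by_le (alpha0_bounded Q) _.
  by rewrite mulr_ge0 ?invr_ge0 ?exprz_ge0 ?addr_ge0 ?divr_ge0 ?ler0n.
have -> : n.+1%:Z - 1 = n%:Z by rewrite intS addrC addKr.
by rewrite -exprnP; apply: alpha_bounded_geometric.
Qed.
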